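(* If condition $(C_k)$ holds for every $k\in I_n$, then for all $i,j\in I_n$ with $i\ne j$ one has $a_{ii}>a_{ji}$, $a_{jj}>a_{ij}$, and $$\frac{a_{\ell i}(a_{jj}-a_{ij})+a_{\ell j}(a_{ii}-a_{ji})}{a_{ii}a_{jj}-a_{ij}a_{ji}}<1\quad\text{for all }\ell\in I_n\setminus\{i,j\},$$ and moreover $U_i=\max\left\{\frac{a_{jj}-a_{ij}}{a_{ii}a_{jj}-a_{ij}a_{ji}}: j\in I_n\setminus\{i\}\right\}$ for every $i\in I_n$.
   Context: Fix $n\ge 2$ and $I_m=\{1,\dots,m\}$. Consider the Lotka–Volterra system $x_i'=b_ix_i(1-\alpha_ix)$, $i\in I_n$, where $b_i>0$, $\alpha_i=(a_{i1},\dots,a_{in})$ with $a_{ii}>0$ and $a_{ij}\ge 0$, on $\mathbb{R}^n_+$. For $u\le v$ (componentwise), $[u,v]=\{x\in\mathbb{R}^n_+:u\le x\le v\}$. For $J\subset I_n$, $u^J_i=u_i$ for $i\in J$ and $0$ otherwise. $\gamma_i=\{x\in\mathbb{R}^n_+:\alpha_ix=1\}$. Define $U$ componentwise by: $U_i=a_{ii}^{-1}$ if $a_{ii}\le a_{ji}$ or $a_{ij}=0$ for some $j\ne i$; otherwise $U_i=0$ if $a_{ji}<a_{ii}$ and $a_{jk}\le a_{ik}$ for all $j,k\in I_n\setminus\{i\}$; otherwise $U_i=\max\{\frac{a_{kj}-a_{ij}}{a_{ii}a_{kj}-a_{ij}a_{ki}}: j,k\in I_n\setminus\{i\},\ a_{kj}>a_{ij}\}$.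 Condition $(C_k)$: either $\alpha_kU^{I_n\setminus\{k\}}<1$, or every $x\in\gamma_k\cap[0,U^{I_n\setminus\{k\}}]$ satisfies $\alpha_jx>1$ for all $j\in I_n\setminus\{k\}$. *)

From HB Require Import structures.
From mathcomp Require Import all_boot all_order all_algebra.
Set Implicit Arguments. Unset Strict Implicit. Unset Printing Implicit Defensive.
Import Order.TTheory GRing.Theory Num.Theory.
Local Open Scope ring_scope.

Definition maxs (R : realFieldType) (s : seq R) : R := foldr Num.max (head 0 s) s.

Definition alpha (R : realFieldType) (n : nat) (A : 'M[R]_n) (k : 'I_n)
  (x : 'I_n -> R) : R := \sum_(j < n) A k j * x j.

Definition restr (R : realFieldType) (n : nat) (u : 'I_n -> R) (J : pred 'I_n)
  : 'I_n -> R := fun i => if J i then u i else 0.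

Definition Uvec (R : realFieldType) (n : nat) (A : 'M[R]_n) (i : 'I_n) : R :=
  if [exists j : 'I_n, (j != i) && ((A i i <= A j i) || (A i j == 0))] then (A i i)^-1
  else if [forall j : 'I_n, forall k : 'I_n,
             ((j != i) && (k != i)) ==> ((A j i < A i i) && (A j k <= A i k))] then 0
  else maxs [seq (A p.2 p.1 - A i p.1) / (A i i * A p.2 p.1 - A i p.1 * A p.2 i)
            | p <- enum [pred p : 'I_n * 'I_n |
                          [&& p.1 != i, p.2 != i & A i p.1 < A p.2 p.1]]].

Definition condC (R : realFieldType) (n : nat) (A : 'M[R]_n) (k : 'I_n) : Prop :=
  let V := restr (Uvec A) (fun i => i != k) in
  alpha A k V < 1 \/
  (forall x : 'I_n -> R, (forall i, 0 <= x i) -> alpha A k x = 1 ->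
     (forall i, x i <= V i) -> forall j, j != k -> 1 < alpha A j x).

From HB Require Import structures.
From mathcomp Require Import all_boot all_order all_algebra.
From mathcomp Require Import ring.
Set Implicit Arguments. Unset Strict Implicit. Unset Printing Implicit Defensive.
Import Order.TTheory GRing.Theory Num.Theory.
Local Open Scope ring_scope.

(* Everything rests on one consequence of (C_k), [condC_exclusion]: no
   nonnegative vector below U^{I_n \ k} lies on or above gamma_k while lying
   on or below some other gamma_j (rescale it onto gamma_k and apply the
   second alternative of (C_k), or bound it by U^{I_n \ k} for the first).
   Applied to the point (1/a_ii) e_i this gives the diagonal dominance
   a_ji < a_ii; applied to the meeting point of gamma_i and gamma_j it gives
   the strict inequality for every third index l.  Finally the formula for
   U_i follows by inspecting the three branches of its definition, using an
   elementary comparison of the candidate ratios ([ratio_le_meet]). *)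

Section MaxOfList.
Variable R : realFieldType.
Implicit Types (s : seq R) (y b : R).

Lemma maxs_ge s y : y \in s -> y <= maxs s.
Proof.
rewrite /maxs; move: (head 0 s) => d.
elim: s => //= x s IH; rewrite in_cons le_max => /orP[/eqP->|/IH->].
  by rewrite lexx.
by rewrite orbT.
Qed.

(* A nonnegative bound on all elements bounds [maxs s] (the empty list has
   maximum 0). *)
Lemma maxs_le s b : 0 <= b -> {in s, forall y, y <= b} -> maxs s <= b.
Proof.
rewrite /maxs => b0 hs.
have : head 0 s <= b by case: s hs => //= x s -> //; exact: mem_head.
move: (head 0 s) => d hd; elim: s hs => //= x s IH hs.
rewrite ge_max hs ?mem_head //= IH // => y ys; apply: hs.
by rewrite in_cons ys orbT.
Qed.

Lemma maxs_ge0 s : {in s, forall y, 0 <= y} -> 0 <= maxs s.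
Proof.
case: s => [|x s] hs; first exact: lexx.
exact: le_trans (hs x (mem_head _ _)) (maxs_ge (mem_head _ _)).
Qed.

End MaxOfList.

Section LinearForms.
Variables (R : realFieldType) (n : nat) (A : 'M[R]_n).
Implicit Types (x y : 'I_n -> R) (k i j : 'I_n).

Lemma alpha_le k x y :
  (forall m, 0 <= A k m) -> (forall m, x m <= y m) -> alpha A k x <= alpha A k y.
Proof. by move=> hA hxy; apply: ler_sum => m _; exact: ler_wpM2l. Qed.

Lemma alpha_ge0 k x :
  (forall m, 0 <= A k m) -> (forall m, 0 <= x m) -> 0 <= alpha A k x.
Proof. by move=> hA hx; apply: sumr_ge0 => m _; exact: mulr_ge0. Qed.

Lemma alphaZ k (c : R) x : alpha A k (fun m => c * x m) = c * alpha A k x.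
Proof. by rewrite /alpha mulr_sumr; apply: eq_bigr => m _; exact: mulrCA. Qed.

Lemma alpha_supp1 k i x :
  (forall m, m != i -> x m = 0) -> alpha A k x = A k i * x i.
Proof.
move=> hx; rewrite /alpha (bigD1 i) //= big1 ?addr0 // => m hm.
by rewrite hx ?mulr0.
Qed.

Lemma alpha_supp2 k i j x : i != j ->
  (forall m, m != i -> m != j -> x m = 0) ->
  alpha A k x = A k i * x i + A k j * x j.
Proof.
move=> hij hx; rewrite /alpha (bigD1 i) //= (bigD1 j) /= ?(eq_sym j) ?hij //.
by rewrite big1 ?addr0 // => m /andP[hmi hmj]; rewrite hx ?mulr0.
Qed.

End LinearForms.

Section TwoByTwo.
Variable R : realFieldType.

Lemma cross_diff_gt0 (a b p q : R) :
  0 < a -> 0 <= b -> p <= a -> b < q -> 0 < a * q - b * p.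
Proof.
move=> ha hb hp hq; rewrite subr_gt0.
by apply: le_lt_trans (ler_wpM2l hb hp) _; rewrite [a * q]mulrC ltr_pM2r.
Qed.

(* With a = a_ii, b = a_ij,
   c = a_ji, d = a_jj, p = a_ki, q = a_kj: if the meeting point of gamma_i and
   gamma_j lies strictly below gamma_k, then the ratio attached to the pair
   (j, k) is at most the one attached to (j, j). *)
Lemma ratio_le_meet (a b c d p q : R) :
  0 <= b -> 0 < a * d - b * c -> 0 < a * q - b * p ->
  (p * (d - b) + q * (a - c)) / (a * d - b * c) < 1 ->
  (q - b) / (a * q - b * p) <= (d - b) / (a * d - b * c).
Proof.
move=> hb hD hD'; rewrite ltr_pdivrMr // mul1r => hbelow.
rewrite ler_pdivrMr // mulrAC ler_pdivlMr // -subr_ge0.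
have -> : (d - b) * (a * q - b * p) - (q - b) * (a * d - b * c) =
  b * ((a * d - b * c) - (p * (d - b) + q * (a - c))) by ring.
by rewrite mulr_ge0 // subr_ge0 ltW.
Qed.

End TwoByTwo.

(* The 2x2 determinant of the rows i, j restricted to the columns i, j, and
   the i-th coordinate of the point where gamma_i and gamma_j meet in the
   (i, j) coordinate plane. *)
Definition det2 (R : realFieldType) (n : nat) (A : 'M[R]_n) (i j : 'I_n) : R :=
  A i i * A j j - A i j * A j i.

Definition meet (R : realFieldType) (n : nat) (A : 'M[R]_n) (i j : 'I_n) : R :=
  (A j j - A i j) / det2 A i j.

Definition meet_point (R : realFieldType) (n : nat) (A : 'M[R]_n) (i j : 'I_n)
  : 'I_n -> R :=
  fun m => if m == i then meet A i j else if m == j then meet A j i else 0.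

Section Exclusion.
Variables (R : realFieldType) (n : nat) (A : 'M[R]_n).
Hypothesis hoff : forall i j, 0 <= A i j.

Lemma condC_exclusion k j (x : 'I_n -> R) : condC A k -> j != k ->
  (forall m, 0 <= x m) -> (forall m, x m <= restr (Uvec A) (fun i => i != k) m) ->
  1 <= alpha A k x -> alpha A j x <= 1 -> False.
Proof.
move=> hC hjk hx0 hxV hk hj; case: hC => /= [hV | hline].
  by have := le_lt_trans (le_trans hk (alpha_le (hoff k) hxV)) hV; rewrite ltxx.
have hk0 : 0 < alpha A k x by exact: lt_le_trans ltr01 hk.
have hc1 : (alpha A k x)^-1 <= 1 by rewrite invf_le1.
have hc0 : 0 <= (alpha A k x)^-1 by rewrite invr_ge0 ltW.
have hy : 1 < alpha A j (fun m => (alpha A k x)^-1 * x m).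
  apply: hline hjk.
  - by move=> m; rewrite mulr_ge0.
  - by rewrite alphaZ mulVf ?lt0r_neq0.
  - by move=> m; rewrite (le_trans _ (hxV m)) // ler_piMl.
have hy' : alpha A j (fun m => (alpha A k x)^-1 * x m) <= 1.
  by rewrite alphaZ (le_trans _ hj) // ler_piMl // alpha_ge0.
by have := lt_le_trans hy hy'; rewrite ltxx.
Qed.

End Exclusion.

Section Theorem8.
Variables (R : realFieldType) (n : nat) (A : 'M[R]_n).
Hypotheses (hdiag : forall i, 0 < A i i) (hoff : forall i j, 0 <= A i j).

Lemma Uvec_ge0 i : 0 <= Uvec A i.
Proof.
rewrite /Uvec; case: ifP => [_|hnot1]; first by rewrite invr_ge0 ltW.
case: ifP => // _; apply: maxs_ge0 => y /mapP[p]; rewrite mem_enum /=.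
move=> /and3P[_ hp2 hlt] ->.
have := negbT hnot1; rewrite negb_exists => /forallP /(_ p.2).
rewrite hp2 /= negb_or -ltNge => /andP[hdom _].
apply: divr_ge0; first by rewrite subr_ge0 ltW.
by rewrite ltW // cross_diff_gt0 // ltW.
Qed.

Hypothesis hC : forall k, condC A k.

(* Diagonal dominance in each column, from (C_j) applied to (1/a_ii) e_i. *)
Lemma diag_dominant i j : i != j -> A j i < A i i.
Proof.
move=> hij; rewrite ltNge; apply/negP => hle.
have Ui : Uvec A i = (A i i)^-1.
  by rewrite /Uvec ifT //; apply/existsP; exists j; rewrite eq_sym hij hle.
pose x m := if m == i then (A i i)^-1 else 0.
have hx : forall m, m != i -> x m = 0 by move=> m hm; rewrite /x (negbTE hm).
have hxi : x i = (A i i)^-1 by rewrite /x eqxx.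
apply: (condC_exclusion hoff (hC j) hij (x := x)).
- by move=> m; rewrite /x; case: ifP => // _; rewrite invr_ge0 ltW.
- move=> m; rewrite /restr; case: (eqVneq m i) => [->|hm].
    by rewrite hij hxi Ui.
  by rewrite hx //; case: ifP => // _; exact: Uvec_ge0.
- by rewrite (alpha_supp1 _ _ hx) hxi ler_pdivlMr // mul1r.
- by rewrite (alpha_supp1 _ _ hx) hxi mulfV ?lt0r_neq0.
Qed.

Lemma det2_gt0 i j : i != j -> 0 < det2 A i j.
Proof.
move=> hij; apply: cross_diff_gt0 => //; first exact: ltW (diag_dominant hij).
by apply: diag_dominant; rewrite eq_sym.
Qed.

Lemma meet_ge0 i j : i != j -> 0 <= meet A i j.
Proof.
move=> hij; apply: divr_ge0; last exact: ltW (det2_gt0 hij).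
by rewrite subr_ge0 ltW // diag_dominant // eq_sym.
Qed.

Lemma meet_le_inv i j : i != j -> meet A i j <= (A i i)^-1.
Proof.
move=> hij; rewrite /meet ler_pdivrMr ?det2_gt0 // ler_pdivlMl // /det2.
by rewrite mulrBr lerD2l lerN2 [A i i * _]mulrC ler_wpM2l // ltW ?diag_dominant.
Qed.

Lemma meet_eq_inv i j : A i j = 0 -> meet A i j = (A i i)^-1.
Proof.
move=> h0; rewrite /meet /det2 h0 subr0 mul0r subr0 invfM mulrCA mulfV ?mulr1 //.
exact: lt0r_neq0.
Qed.

Lemma meet_point_ge0 i j : i != j -> forall m, 0 <= meet_point A i j m.
Proof.
move=> hij m; rewrite /meet_point; case: ifP => _; first exact: meet_ge0.
by case: ifP => _ //; apply: meet_ge0; rewrite eq_sym.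
Qed.

Lemma alpha_meet_point i j m : i != j ->
  alpha A m (meet_point A i j) =
  (A m i * (A j j - A i j) + A m j * (A i i - A j i)) / det2 A i j.
Proof.
move=> hij; rewrite (alpha_supp2 _ _ hij); last first.
  by move=> m' hi hj; rewrite /meet_point (negbTE hi) (negbTE hj).
rewrite /meet_point eqxx eq_sym (negbTE hij) eqxx /meet.
have -> : det2 A j i = det2 A i j by rewrite /det2; ring.
by rewrite [RHS]mulrDl !mulrA.
Qed.

Lemma alpha_meet_point_self i j : i != j -> alpha A i (meet_point A i j) = 1.
Proof.
move=> hij; rewrite alpha_meet_point //.
have -> : A i i * (A j j - A i j) + A i j * (A i i - A j i) = det2 A i j.
  by rewrite /det2; ring.
by rewrite divff // lt0r_neq0 // det2_gt0.
Qed.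

Lemma Uvec_ge_meet i j : i != j -> meet A i j <= Uvec A i.
Proof.
move=> hij; have hji : j != i by rewrite eq_sym.
rewrite /Uvec; case: ifP => [_|_]; first exact: meet_le_inv.
case: ifP => [hall|_].
  move/forallP: hall => /(_ j) /forallP /(_ j) /implyP.
  by rewrite hji => /(_ isT) /andP[_]; rewrite leNgt diag_dominant.
apply: maxs_ge; apply/mapP; exists (j, j) => //.
by rewrite mem_enum inE /= hji diag_dominant.
Qed.

Lemma meet_point_below i j l : i != j -> l != i -> l != j ->
  alpha A l (meet_point A i j) < 1.
Proof.
move=> hij hli hlj; rewrite ltNge; apply/negP => habove.
have hil : i != l by rewrite eq_sym.
have below_U m : meet_point A i j m <= restr (Uvec A) (fun i => i != l) m.
  rewrite /restr /meet_point; case: (eqVneq m i) => [->|hmi].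
    by rewrite eq_sym hli Uvec_ge_meet.
  case: (eqVneq m j) => [->|hmj].
    by rewrite eq_sym hlj Uvec_ge_meet // eq_sym.
  by case: ifP => // _; exact: Uvec_ge0.
have on_gamma_i : alpha A i (meet_point A i j) <= 1.
  by rewrite alpha_meet_point_self.
exact: (condC_exclusion hoff (hC l) hil (meet_point_ge0 hij) below_U habove on_gamma_i).
Qed.

Lemma pair_ratio_le_meet i j k : j != i -> k != i -> A i j < A k j ->
  (A k j - A i j) / (A i i * A k j - A i j * A k i) <= meet A i j.
Proof.
move=> hji hki hlt; have hij : i != j by rewrite eq_sym.
case: (eqVneq k j) => [->|hkj]; first exact: lexx.
apply: ratio_le_meet => //; first exact: det2_gt0.
  by apply: cross_diff_gt0 => //; rewrite ltW ?diag_dominant // eq_sym.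
by rewrite -alpha_meet_point // meet_point_below.
Qed.

(* U_i is at most the largest meeting coordinate on gamma_i: in the first
   branch of its definition dominance forces a_ij = 0, where the meeting
   coordinate is 1/a_ii; in the third every candidate ratio is dominated. *)
Lemma Uvec_le_max_meet i :
  Uvec A i <= maxs [seq meet A i j | j <- enum [pred j : 'I_n | j != i]].
Proof.
set M := maxs _.
have ge_meet j : j != i -> meet A i j <= M.
  by move=> hji; apply: maxs_ge; apply/mapP; exists j; rewrite ?mem_enum.
have max_ge0 : 0 <= M.
  apply: maxs_ge0 => y /mapP[j]; rewrite mem_enum => hji ->.
  by rewrite meet_ge0 // eq_sym.
rewrite /Uvec; case: ifP => [/existsP[j /andP[hji]]|_].
  rewrite leNgt diag_dominant ?(eq_sym i) //= => /eqP/meet_eq_inv <-.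
  exact: ge_meet.
case: ifP => // _; apply: maxs_le => // y /mapP[[j k]].
rewrite mem_enum /= => /and3P[hji hki hlt] ->.
exact: le_trans (pair_ratio_le_meet hji hki hlt) (ge_meet j hji).
Qed.

End Theorem8.

Theorem mainTheorem8 (R : realFieldType) (n : nat) (A : 'M[R]_n)
  (hn : (2 <= n)%N)
  (hdiag : forall i, 0 < A i i) (hoff : forall i j, 0 <= A i j)
  (hC : forall k, condC A k) :
  (forall i j : 'I_n, i != j ->
     [/\ A j i < A i i, A i j < A j j &
         forall l : 'I_n, l != i -> l != j ->
           (A l i * (A j j - A i j) + A l j * (A i i - A j i))
             / (A i i * A j j - A i j * A j i) < 1]) /\
  (forall i : 'I_n,
     Uvec A i = maxs [seq (A j j - A i j) / (A i i * A j j - A i j * A j i)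
                     | j <- enum [pred j : 'I_n | j != i]]).
Proof.
split.
  move=> i j hij; split; [exact: diag_dominant | |].
    by apply: diag_dominant; rewrite // eq_sym.
  by move=> l hli hlj; rewrite -alpha_meet_point // meet_point_below.
move=> i; apply: le_anti; rewrite Uvec_le_max_meet //=.
apply: maxs_le; first exact: Uvec_ge0.
by move=> y /mapP[j]; rewrite mem_enum => hji ->; rewrite Uvec_ge_meet // eq_sym.
Qed.
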